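(* Let $\mathcal{E}$ and $\mathcal{S}$ be extensive categories with finite products and let $R : \mathcal{S} \to \mathcal{E}$ be a functor preserving finite coproducts. Suppose $R$ has a left adjoint $L : \mathcal{E}\to\mathcal{S}$ that preserves finite products, and that $R$ is closed under subobjects. Then for every decidable object $X$ of $\mathcal{E}$, the unit $X \to R(LX)$ is an isomorphism.
   Context: Extensive category: a category with finite coproducts such that $\mathcal{E}/X \times \mathcal{E}/Y \to \mathcal{E}/(X+Y)$ is an equivalence for all $X,Y$. A summand is a map $X\to Z$ for which there is $Y\to Z$ making $X\to Z\leftarrow Y$ a coproduct. An object $X$ is decidable if its diagonal $X\to X\times X$ is a summand. For an adjunction $L\dashv R : \mathcal{S}\to\mathcal{E}$, the right adjoint $R$ is said to be closed under subobjects if for every $A$ in $\mathcal{S}$ and every monomorphism $X \to RA$ in $\mathcal{E}$, the unit $X \to R(LX)$ is an isomorphism. *)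

From Stdlib Require Import ClassicalEpsilon.

Set Implicit Arguments.
Unset Strict Implicit.

Record Category := {
  Ob :> Type;
  Hom : Ob -> Ob -> Type;
  idm : forall A, Hom A A;
  comp : forall A B C, Hom B C -> Hom A B -> Hom A C;
  comp_id_l : forall A B (f : Hom A B), comp (idm B) f = f;
  comp_id_r : forall A B (f : Hom A B), comp f (idm A) = f;
  comp_assoc : forall A B C D (f : Hom A B) (g : Hom B C) (h : Hom C D),
      comp h (comp g f) = comp (comp h g) f
}.

Arguments Hom {c} _ _.
Arguments idm {c} _.
Arguments comp {c A B C} _ _.

Notation "g \o f" := (comp g f) (at level 40, left associativity).

Section Basic.
Context {C : Category}.

Definition is_iso {A B : C} (f : Hom A B) : Prop :=
  exists g : Hom B A, g \o f = idm A /\ f \o g = idm B.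

Definition is_mono {A B : C} (f : Hom A B) : Prop :=
  forall Z (u v : Hom Z A), f \o u = f \o v -> u = v.

Definition is_terminal (T : C) : Prop :=
  forall A : C, exists! f : Hom A T, True.

Definition is_initial (I : C) : Prop :=
  forall A : C, exists! f : Hom I A, True.

Definition is_product {A B P : C} (p1 : Hom P A) (p2 : Hom P B) : Prop :=
  forall Z (f : Hom Z A) (g : Hom Z B),
    exists! h : Hom Z P, p1 \o h = f /\ p2 \o h = g.

Definition is_coproduct {A B Q : C} (i1 : Hom A Q) (i2 : Hom B Q) : Prop :=
  forall Z (f : Hom A Z) (g : Hom B Z),
    exists! h : Hom Q Z, h \o i1 = f /\ h \o i2 = g.

Definition is_summand {X Z : C} (m : Hom X Z) : Prop :=
  exists (Y : C) (n : Hom Y Z), is_coproduct m n.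

End Basic.

Record FinProducts (C : Category) := {
  fp_term : Ob C;
  fp_term_ok : is_terminal fp_term;
  fp_obj : C -> C -> C;
  fp_pi1 : forall A B, Hom (fp_obj A B) A;
  fp_pi2 : forall A B, Hom (fp_obj A B) B;
  fp_ok : forall A B, is_product (fp_pi1 A B) (fp_pi2 A B)
}.

Record FinCoproducts (C : Category) := {
  cp_init : Ob C;
  cp_init_ok : is_initial cp_init;
  cp_obj : C -> C -> C;
  cp_inl : forall A B, Hom A (cp_obj A B);
  cp_inr : forall A B, Hom B (cp_obj A B);
  cp_ok : forall A B, is_coproduct (cp_inl A B) (cp_inr A B)
}.

Arguments fp_obj {C} f _ _.
Arguments fp_pi1 {C} f {A B}.
Arguments fp_pi2 {C} f {A B}.
Arguments cp_obj {C} f _ _.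
Arguments cp_inl {C} f {A B}.
Arguments cp_inr {C} f {A B}.

Lemma ex_of_uniq {T : Type} (P : T -> Prop) : (exists! x, P x) -> exists x, P x.
Proof. intros [x [Hx _]]; exists x; exact Hx. Qed.

Definition pairing {C : Category} (p : FinProducts C) {Z A B : C}
    (f : Hom Z A) (g : Hom Z B) : Hom Z (fp_obj p A B) :=
  proj1_sig (constructive_indefinite_description _
     (ex_of_uniq (@fp_ok C p A B Z f g))).

Definition copair {C : Category} (c : FinCoproducts C) {A B Z : C}
    (f : Hom A Z) (g : Hom B Z) : Hom (cp_obj c A B) Z :=
  proj1_sig (constructive_indefinite_description _
     (ex_of_uniq (@cp_ok C c A B Z f g))).

Definition cp_map {C : Category} (c : FinCoproducts C) {A B A' B' : C}
    (f : Hom A A') (g : Hom B B') : Hom (cp_obj c A B) (cp_obj c A' B') :=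
  copair c (cp_inl c \o f) (cp_inr c \o g).

Definition diagonal {C : Category} (p : FinProducts C) (X : C)
    : Hom X (fp_obj p X X) := pairing p (idm X) (idm X).

Definition decidable_obj {C : Category} (p : FinProducts C) (X : C) : Prop :=
  is_summand (diagonal p X).

(** The functor  E/X x E/Y -> E/(X+Y),  ((A,f),(B,g)) |-> (A+B, f+g),
    (a,b) |-> a+b, is an equivalence of categories, i.e. it is faithful,
    full and essentially surjective. *)
Definition Extensive {C : Category} (c : FinCoproducts C) : Prop :=
  forall X Y : C,
  (* faithful *)
  (forall (A A' : C) (f : Hom A X) (f' : Hom A' X)
          (B B' : C) (g : Hom B Y) (g' : Hom B' Y)
          (a1 a2 : Hom A A') (b1 b2 : Hom B B'),
      f' \o a1 = f -> f' \o a2 = f -> g' \o b1 = g -> g' \o b2 = g ->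
      cp_map c a1 b1 = cp_map c a2 b2 -> a1 = a2 /\ b1 = b2) /\
  (* full *)
  (forall (A A' : C) (f : Hom A X) (f' : Hom A' X)
          (B B' : C) (g : Hom B Y) (g' : Hom B' Y)
          (k : Hom (cp_obj c A B) (cp_obj c A' B')),
      cp_map c f' g' \o k = cp_map c f g ->
      exists (a : Hom A A') (b : Hom B B'),
        f' \o a = f /\ g' \o b = g /\ cp_map c a b = k) /\
  (* essentially surjective *)
  (forall (W : C) (h : Hom W (cp_obj c X Y)),
      exists (A : C) (f : Hom A X) (B : C) (g : Hom B Y)
             (i : Hom (cp_obj c A B) W),
        is_iso i /\ h \o i = cp_map c f g).

Record Functor (C D : Category) := {
  fobj :> C -> D;
  fmap : forall A B : C, Hom A B -> Hom (fobj A) (fobj B);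
  fmap_id : forall A : C, fmap (idm A) = idm (fobj A);
  fmap_comp : forall A B Cc (f : Hom A B) (g : Hom B Cc),
      fmap (g \o f) = fmap g \o fmap f
}.
Arguments fmap {C D} f0 {A B} _.

Definition preserves_fin_coproducts {C D : Category} (F : Functor C D) : Prop :=
  (forall I : C, is_initial I -> is_initial (F I)) /\
  (forall (A B Q : C) (i1 : Hom A Q) (i2 : Hom B Q),
      is_coproduct i1 i2 -> is_coproduct (fmap F i1) (fmap F i2)).

Definition preserves_fin_products {C D : Category} (F : Functor C D) : Prop :=
  (forall T : C, is_terminal T -> is_terminal (F T)) /\
  (forall (A B P : C) (p1 : Hom P A) (p2 : Hom P B),
      is_product p1 p2 -> is_product (fmap F p1) (fmap F p2)).

Definition is_adjunction_unit {E S : Category} (L : Functor E S)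
    (R : Functor S E) (eta : forall X : E, Hom X (R (L X))) : Prop :=
  (forall (X Y : E) (h : Hom X Y),
      fmap R (fmap L h) \o eta X = eta Y \o h) /\
  (forall (X : E) (A : S) (f : Hom X (R A)),
      exists! g : Hom (L X) A, fmap R g \o eta X = f).

Definition closed_under_subobjects {E S : Category} (L : Functor E S)
    (R : Functor S E) (eta : forall X : E, Hom X (R (L X))) : Prop :=
  forall (A : S) (X : E) (m : Hom X (R A)), is_mono m -> is_iso (eta X).

Arguments is_adjunction_unit {E S} L R eta.
Arguments closed_under_subobjects {E S} L R eta.

(* The unit [X -> R(LX)] is iso as soon as it is mono, by closure under
   subobjects, and it is mono iff [L u = L v] forces [u = v].  Since [X] is
   decidable, [X * X = X + Y] with the diagonal as first summand; sending [X]
   to the left and [Y] to the right point of [1 + 1] gives a map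
   [chi : X * X -> R(1 + 1)], which factors through the unit and hence cannot
   distinguish maps identified by [L].  If [L u = L v] then, [L] preserving
   products, [L <u,v> = L <u,u>], so [chi <u,v> = chi <u,u>] lands in the left
   copy of [R 1].  By extensivity the part of the domain that [<u,v>] sends to
   [Y] also lands in the right copy, and coproducts being disjoint it is
   initial: [<u,v>] factors through the diagonal, i.e. [u = v]. *)
From Stdlib Require Import ClassicalEpsilon.

Section CategoryFacts.
Context {C : Category}.

Lemma coproduct_ext {A B Q : C} (i1 : Hom A Q) (i2 : Hom B Q) :
  is_coproduct i1 i2 -> forall Z (h k : Hom Q Z),
  h \o i1 = k \o i1 -> h \o i2 = k \o i2 -> h = k.
Proof.
  intros Hc Z h k H1 H2.
  destruct (Hc Z (h \o i1) (h \o i2)) as [x [_ Hu]].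
  rewrite <- (Hu h (conj eq_refl eq_refl)).
  exact (Hu k (conj (eq_sym H1) (eq_sym H2))).
Qed.

Lemma product_ext {A B P : C} (p1 : Hom P A) (p2 : Hom P B) :
  is_product p1 p2 -> forall Z (h k : Hom Z P),
  p1 \o h = p1 \o k -> p2 \o h = p2 \o k -> h = k.
Proof.
  intros Hp Z h k H1 H2.
  destruct (Hp Z (p1 \o h) (p2 \o h)) as [x [_ Hu]].
  rewrite <- (Hu h (conj eq_refl eq_refl)).
  exact (Hu k (conj (eq_sym H1) (eq_sym H2))).
Qed.

Lemma initial_ext {I A : C} : is_initial I -> forall f g : Hom I A, f = g.
Proof.
  intros HI f g. destruct (HI A) as [x [_ Hu]].
  rewrite <- (Hu f Logic.I). exact (Hu g Logic.I).
Qed.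

Lemma copair_inl (c : FinCoproducts C) {A B Z : C} (f : Hom A Z) (g : Hom B Z) :
  copair c f g \o cp_inl c = f.
Proof.
  unfold copair; destruct (constructive_indefinite_description _ _) as [h [H1 H2]].
  exact H1.
Qed.

Lemma copair_inr (c : FinCoproducts C) {A B Z : C} (f : Hom A Z) (g : Hom B Z) :
  copair c f g \o cp_inr c = g.
Proof.
  unfold copair; destruct (constructive_indefinite_description _ _) as [h [H1 H2]].
  exact H2.
Qed.

Lemma pairing_pi1 (p : FinProducts C) {Z A B : C} (f : Hom Z A) (g : Hom Z B) :
  fp_pi1 p \o pairing p f g = f.
Proof.
  unfold pairing; destruct (constructive_indefinite_description _ _) as [h [H1 H2]].
  exact H1.
Qed.

Lemma pairing_pi2 (p : FinProducts C) {Z A B : C} (f : Hom Z A) (g : Hom Z B) :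
  fp_pi2 p \o pairing p f g = g.
Proof.
  unfold pairing; destruct (constructive_indefinite_description _ _) as [h [H1 H2]].
  exact H2.
Qed.

Lemma cp_map_inl (c : FinCoproducts C) {A B A' B' : C} (f : Hom A A') (g : Hom B B') :
  cp_map c f g \o cp_inl c = cp_inl c \o f.
Proof. apply copair_inl. Qed.

Lemma cp_map_inr (c : FinCoproducts C) {A B A' B' : C} (f : Hom A A') (g : Hom B B') :
  cp_map c f g \o cp_inr c = cp_inr c \o g.
Proof. apply copair_inr. Qed.

Lemma coproduct_iso_comp (c : FinCoproducts C) {A B W : C} (i : Hom (cp_obj c A B) W) :
  is_iso i -> is_coproduct (i \o cp_inl c) (i \o cp_inr c).
Proof.
  intros [j [Hji Hij]] Z f g. exists (copair c f g \o j). split.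
  - split; rewrite <- !comp_assoc, (comp_assoc _ i j), Hji, comp_id_l.
    + apply copair_inl.
    + apply copair_inr.
  - intros h [E1 E2].
    assert (Hh : h \o i = copair c f g).
    { apply (coproduct_ext _ _ (@cp_ok _ c A B)).
      - rewrite <- comp_assoc, E1, copair_inl. reflexivity.
      - rewrite <- comp_assoc, E2, copair_inr. reflexivity. }
    rewrite <- Hh, <- comp_assoc, Hij, comp_id_r. reflexivity.
Qed.

Lemma diagonal_comp (p : FinProducts C) {Z X : C} (u : Hom Z X) :
  diagonal p X \o u = pairing p u u.
Proof.
  apply (product_ext _ _ (@fp_ok _ p X X)); unfold diagonal;
    rewrite comp_assoc, ?pairing_pi1, ?pairing_pi2, comp_id_l; reflexivity.
Qed.

Lemma pairing_eq_diagonal (p : FinProducts C) {Z X : C} (u v f : Hom Z X) :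
  pairing p u v = diagonal p X \o f -> u = v.
Proof.
  rewrite diagonal_comp. intros Huv.
  assert (Hu : u = f) by (rewrite <- (pairing_pi1 p u v), Huv; apply pairing_pi1).
  assert (Hv : v = f) by (rewrite <- (pairing_pi2 p u v), Huv; apply pairing_pi2).
  congruence.
Qed.

End CategoryFacts.

Section Extensive.
Context {C : Category} (c : FinCoproducts C).
Hypothesis ext : Extensive c.

Lemma initial_strict (B : C) (a : Hom B (cp_init c)) : is_initial B.
Proof.
  set (I := cp_init c).
  assert (HI : is_initial I) by apply cp_init_ok.
  destruct (ext I I) as [_ [Hfull _]].
  (* Fullness, applied to [inl \o [id, id] : B + B -> B + 0] over [a + a] and
     [a + id], produces [b1 : B -> 0] with [inr \o b1 = inl]; so [idm B]
     factors through [0]. *)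
  set (k := cp_inl c \o copair c (idm B) (idm B) : Hom (cp_obj c B B) (cp_obj c B I)).
  destruct (Hfull B B a a B I a (idm I) k) as [a1 [b1 [_ [_ Hk]]]].
  { apply (coproduct_ext _ _ (@cp_ok _ c B B)); unfold k.
    - rewrite <- !comp_assoc, copair_inl, comp_id_r, !cp_map_inl. reflexivity.
    - rewrite <- !comp_assoc, copair_inr, comp_id_r, cp_map_inl, cp_map_inr.
      rewrite (initial_ext HI (cp_inl c) (cp_inr c)). reflexivity. }
  destruct (HI B) as [z _].
  assert (Hb : cp_inr c \o b1 = cp_inl c :> Hom B (cp_obj c B I)).
  { rewrite <- (cp_map_inr c a1 b1), Hk. unfold k.
    rewrite <- comp_assoc, copair_inr, comp_id_r. reflexivity. }
  assert (Hzb : z \o b1 = idm B).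
  { assert (H := f_equal (fun h => copair c (idm B) z \o h) Hb). simpl in H.
    rewrite comp_assoc, copair_inr, copair_inl in H. exact H. }
  intros A. destruct (HI A) as [zA _]. exists (zA \o b1). split; [exact Logic.I|].
  intros f _. rewrite <- (comp_id_r f), <- Hzb, comp_assoc.
  rewrite (initial_ext HI (f \o z) zA). reflexivity.
Qed.

Lemma cp_disjoint (X Y D : C) (x : Hom D X) (y : Hom D Y) :
  cp_inl c \o x = cp_inr c \o y -> is_initial D.
Proof.
  intros Hxy.
  set (I := cp_init c).
  assert (HI : is_initial I) by apply cp_init_ok.
  destruct (ext X Y) as [_ [Hfull _]].
  destruct (HI X) as [zX _]. destruct (HI Y) as [zY _]. destruct (HI D) as [zD _].
  set (k := cp_inr c \o copair c (idm D) zD : Hom (cp_obj c D I) (cp_obj c I D)).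
  destruct (Hfull D I x zX I D zY y k) as [a1 _].
  { apply (coproduct_ext _ _ (@cp_ok _ c D I)); unfold k.
    - rewrite <- !comp_assoc, copair_inl, comp_id_r, cp_map_inr, cp_map_inl.
      symmetry; exact Hxy.
    - apply (initial_ext HI). }
  exact (initial_strict _ a1).
Qed.

Lemma coproduct_disjoint (X Y Q D : C) (i1 : Hom X Q) (i2 : Hom Y Q)
  (x : Hom D X) (y : Hom D Y) :
  is_coproduct i1 i2 -> i1 \o x = i2 \o y -> is_initial D.
Proof.
  intros Hc Hxy. destruct (Hc _ (cp_inl c) (cp_inr c)) as [phi [[H1 H2] _]].
  apply (cp_disjoint _ _ _ x y).
  rewrite <- H1, <- H2, <- !comp_assoc, Hxy. reflexivity.
Qed.

Lemma coproduct_pullback (X Y Q Z : C) (i1 : Hom X Q) (i2 : Hom Y Q) (w : Hom Z Q) :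
  is_coproduct i1 i2 ->
  exists (A : C) (f : Hom A X) (B : C) (g : Hom B Y) (j1 : Hom A Z) (j2 : Hom B Z),
    is_coproduct j1 j2 /\ w \o j1 = i1 \o f /\ w \o j2 = i2 \o g.
Proof.
  intros Hc. destruct (Hc _ (cp_inl c) (cp_inr c)) as [phi [[H1 H2] _]].
  set (psi := copair c i1 i2).
  assert (Hpsi : psi \o phi = idm Q).
  { apply (coproduct_ext _ _ Hc).
    - rewrite <- comp_assoc, H1, comp_id_l. apply copair_inl.
    - rewrite <- comp_assoc, H2, comp_id_l. apply copair_inr. }
  destruct (ext X Y) as [_ [_ Hess]].
  destruct (Hess Z (phi \o w)) as [A [f [B [g [i [Hi Heq]]]]]].
  exists A, f, B, g, (i \o cp_inl c), (i \o cp_inr c).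
  split; [apply coproduct_iso_comp; exact Hi|].
  assert (Hw : forall D (t : Hom D Z), w \o t = psi \o (phi \o w \o t)).
  { intros D t. rewrite !comp_assoc, Hpsi, comp_id_l. reflexivity. }
  split.
  - rewrite Hw, (comp_assoc (cp_inl c) i), Heq, cp_map_inl, comp_assoc.
    unfold psi; rewrite copair_inl. reflexivity.
  - rewrite Hw, (comp_assoc (cp_inr c) i), Heq, cp_map_inr, comp_assoc.
    unfold psi; rewrite copair_inr. reflexivity.
Qed.

Lemma factor_through_summand (X Y Q Z : C) (i1 : Hom X Q) (i2 : Hom Y Q)
  (w : Hom Z Q) :
  is_coproduct i1 i2 ->
  (forall B (b : Hom B Z) (g : Hom B Y), w \o b = i2 \o g -> is_initial B) ->
  exists f : Hom Z X, w = i1 \o f.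
Proof.
  intros Hc Hmiss.
  destruct (coproduct_pullback _ _ _ _ _ _ w Hc)
    as [A [f [B [g [j1 [j2 [Hj [Hw1 Hw2]]]]]]]].
  assert (HB : is_initial B) by exact (Hmiss B j2 g Hw2).
  destruct (HB X) as [zX _].
  destruct (Hj X f zX) as [h [[Hh1 Hh2] _]].
  exists h. apply (coproduct_ext _ _ Hj).
  - rewrite Hw1, <- comp_assoc, Hh1. reflexivity.
  - apply (initial_ext HB).
Qed.

End Extensive.

Section Adjunction.
Context {E S : Category} (L : Functor E S) (R : Functor S E)
  (eta : forall X : E, Hom X (R (L X))).
Hypothesis Hadj : is_adjunction_unit L R eta.

Lemma unit_comp_inj (X Z : E) (u v : Hom Z X) :
  eta X \o u = eta X \o v -> fmap L u = fmap L v.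
Proof.
  destruct Hadj as [Hnat Huniv]. intros Huv.
  destruct (Huniv Z (L X) (eta X \o u)) as [g0 [_ Hg]].
  rewrite <- (Hg (fmap L u) (Hnat _ _ u)).
  apply Hg. rewrite Hnat. symmetry; exact Huv.
Qed.

(* Because every [f : W -> R A] is [R g \o eta W] for its transpose [g]. *)
Lemma transpose_congr (W V : E) (A : S) (f : Hom W (R A)) (p q : Hom V W) :
  fmap L p = fmap L q -> f \o p = f \o q.
Proof.
  destruct Hadj as [Hnat Huniv]. intros Hpq.
  destruct (Huniv W A f) as [g [Hg _]].
  rewrite <- Hg, <- !comp_assoc, <- (Hnat _ _ p), <- (Hnat _ _ q), Hpq.
  reflexivity.
Qed.

End Adjunction.

Lemma fmap_pairing_congr {C D : Category} (F : Functor C D) (p : FinProducts C)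
  {Z X : C} (u v : Hom Z X) :
  is_product (fmap F (fp_pi1 p (A:=X) (B:=X))) (fmap F (fp_pi2 p (A:=X) (B:=X))) ->
  fmap F u = fmap F v -> fmap F (pairing p u v) = fmap F (pairing p u u).
Proof.
  intros HFp Huv. apply (product_ext _ _ HFp);
    rewrite <- !fmap_comp, ?pairing_pi1, ?pairing_pi2;
    [reflexivity | symmetry; exact Huv].
Qed.

Lemma decidable_unit_mono {E S : Category}
  (pE : FinProducts E) {cE : FinCoproducts E} (extE : Extensive cE)
  (pS : FinProducts S) (cS : FinCoproducts S)
  {R : Functor S E} (HR : preserves_fin_coproducts R)
  {L : Functor E S} {eta : forall X : E, Hom X (R (L X))}
  (Hadj : is_adjunction_unit L R eta)
  (HL : preserves_fin_products L)
  (X : E) : decidable_obj pE X -> is_mono (eta X).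
Proof.
  intros [Y [n Hc]] Z u v Huv.
  destruct (fp_term_ok pS (L X)) as [bX _].
  destruct (fp_term_ok pS (L Y)) as [bY _].
  set (inlX := fmap R bX \o eta X). set (inrY := fmap R bY \o eta Y).
  destruct (Hc (R (cp_obj cS (fp_term pS) (fp_term pS)))
                (fmap R (cp_inl cS) \o inlX) (fmap R (cp_inr cS) \o inrY))
    as [chi [[Hchi1 Hchi2] _]].
  assert (HLuv : fmap L (pairing pE u v) = fmap L (diagonal pE X \o u)).
  { rewrite diagonal_comp.
    apply (fmap_pairing_congr L pE u v (proj2 HL _ _ _ _ _ (@fp_ok _ pE X X))).
    exact (unit_comp_inj L R eta Hadj _ _ u v Huv). }
  destruct (factor_through_summand cE extE _ _ _ _ _ _ (pairing pE u v) Hc)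
    as [f Hf].
  - intros B b g Hb.
    apply (coproduct_disjoint cE extE _ _ _ _ _ _
             (inlX \o (u \o b)) (inrY \o g)
             (proj2 HR _ _ _ _ _ (@cp_ok _ cS (fp_term pS) (fp_term pS)))).
    transitivity (chi \o (pairing pE u v \o b)).
    + rewrite (comp_assoc _ inlX), <- Hchi1, <- comp_assoc, (comp_assoc b u).
      rewrite !(comp_assoc b _ chi).
      rewrite (transpose_congr L R eta Hadj _ _ _ chi _ _ HLuv). reflexivity.
    + rewrite Hb, comp_assoc, Hchi2, comp_assoc. reflexivity.
  - exact (pairing_eq_diagonal pE u v f Hf).
Qed.

Theorem proposition2p8
  (E S : Category)
  (pE : FinProducts E) (cE : FinCoproducts E) (extE : Extensive cE)
  (pS : FinProducts S) (cS : FinCoproducts S) (extS : Extensive cS)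
  (R : Functor S E) (HR : preserves_fin_coproducts R)
  (L : Functor E S) (eta : forall X : E, Hom X (R (L X)))
  (Hadj : is_adjunction_unit L R eta)
  (HL : preserves_fin_products L)
  (Hsub : closed_under_subobjects L R eta) :
  forall X : E, decidable_obj pE X -> is_iso (eta X).
Proof.
  intros X HX.
  apply (Hsub (L X) X (eta X)).
  exact (decidable_unit_mono pE extE pS cS HR Hadj HL X HX).
Qed.
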